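(* Define $F(0)=1$, $F(1)=2$ and $F(n)=F(n-1)+F(n-2)$ for $n\ge 2$ (so $\sum_{n\ge0}F(n)q^n=\frac{1+q}{1-q-q^2}$). For a word $w=w_1\cdots w_n$ over $\{1,2,3\}$ let $s(w)=|\{i : 1\le i\le n-2,\ w_{i+2}-w_i=2\}|$. Then for every $n\ge 0$, the number of words $w\in\{1,2,3\}^{2n}$ with $s(w)=0$ is $F(2n)^2$, and the number of words $w\in\{1,2,3\}^{2n+1}$ with $s(w)=0$ is $F(2n)F(2n+2)$.
   Context: The condition $s(w)=0$ means $w$ avoids the place-difference-value pattern $(12,(\mathbb{P},\{2\},\mathbb{P}),\{(1,2,\{2\})\},(\mathbb{P},\mathbb{P}))$, i.e. there is no $i$ with $w_{i+2}=w_i+2$. *)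

From mathcomp Require Import all_boot.
Set Implicit Arguments. Unset Strict Implicit. Unset Printing Implicit Defensive.

Fixpoint F (n : nat) : nat :=
  match n with
  | 0 => 1
  | 1 => 2
  | (m.+1 as k).+1 => F k + F m
  end.

(* A word of length n over {1,2,3} is an n.-tuple of 'I_3;
   the element a : 'I_3 stands for the letter a+1. *)
Definition letter (a : 'I_3) : nat := (nat_of_ord a).+1.

(* s(w) = #{ i : 1 <= i <= n-2 | w_{i+2} - w_i = 2 }, written 0-based
   as i ranging over 0 <= i < n-2 with w`_(i+2) = w`_i + 2. *)
Definition s (n : nat) (w : n.-tuple 'I_3) : nat :=
  count (fun i => letter (nth ord0 w i.+2) == letter (nth ord0 w i) + 2)
        (iota 0 (n - 2)).

From mathcomp Require Import all_boot zify.

(* The constraint w_(i+2) <> w_i + 2 only links letters of equal parity, so a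
   word avoids the pattern iff both its odd- and its even-indexed subwords
   avoid the adjacent factor "1 3".  Writing a(k) for the number of such words
   of length k, the count is a(ceil(N/2)) * a(floor(N/2)).  A transfer-matrix
   computation shows a(k+2) + a(k) = 3 a(k+1), the recurrence of F(2k), and
   a(0) = F(0), a(1) = F(2). *)

Definition jump (x z : 'I_3) : bool := letter z == letter x + 2.

Lemma jumpE x z : jump x z = (x == ord0) && (z == ord_max).
Proof. by case: x z => [[|[|[|?]]] ?] [[|[|[|?]]] ?]. Qed.

Fixpoint jump_free (w : seq 'I_3) : bool :=
  if w is x :: w' then
    (if w' is _ :: z :: _ then ~~ jump x z else true) && jump_free w'
  else true.

Lemma jump_free_nth w :
  jump_free w = all (fun i => ~~ jump (nth ord0 w i) (nth ord0 w i.+2))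
                    (iota 0 (size w - 2)).
Proof.
elim: w => [|x [|y [|z r]] IHw] //.
rewrite -[jump_free _]/(~~ jump x z && jump_free [:: y, z & r]) {}IHw /= !subn2 /=.
by rewrite -[iota 1 _]/(iota (1 + 0) _) iotaDl all_map.
Qed.

Lemma s_eq0 n (w : n.-tuple 'I_3) : (s w == 0) = jump_free w.
Proof. by rewrite jump_free_nth size_tuple eqn0Ngt -has_count -all_predC. Qed.

Lemma card_tuple_cons (T : finType) n (P : pred (seq T)) :
  #|[set t : n.+1.-tuple T | P t]| = \sum_(x : T) #|[set t : n.-tuple T | P (x :: t)]|.
Proof.
rewrite -sum1_card (partition_big (@thead _ _) xpredT) //=.
apply: eq_bigr => x _; rewrite sum1_card.
have cons_inj : injective (fun t : n.-tuple T => [tuple of x :: t]).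
  by move=> u v [] /val_inj.
rewrite -(card_imset _ cons_inj); apply: eq_card => /tupleP[y u].
rewrite unfold_in inE theadE; case: (eqVneq y x) => [-> | neq_yx].
  by rewrite andbT (mem_imset _ _ cons_inj) inE.
by rewrite andbF; apply/esym/imsetP => -[v _ [eq_yx _]]; rewrite eq_yx eqxx in neq_yx.
Qed.

(* [chain_ext k x] counts the words z_1 ... z_k such that x z_1 ... z_k has no
   adjacent jump. *)
Fixpoint chain_ext (k : nat) (x : 'I_3) : nat :=
  if k is k'.+1 then \sum_(z | ~~ jump x z) chain_ext k' z else 1.

Definition prefixed_free n (x y : 'I_3) : nat :=
  #|[set t : n.-tuple 'I_3 | jump_free [:: x, y & t]]|.

Lemma prefixed_freeS n x y :
  prefixed_free n.+1 x y = \sum_(z | ~~ jump x z) prefixed_free n y z.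
Proof.
rewrite /prefixed_free (card_tuple_cons _ _ (fun w => jump_free [:: x, y & w])).
rewrite [RHS]big_mkcond; apply: eq_bigr => z _; case: ifP => jump_xz.
  by apply: eq_card => t; rewrite !inE [jump_free (x :: _)]/= jump_xz.
apply/eqP; rewrite cards_eq0; apply/eqP/setP => t.
by rewrite !inE [jump_free (x :: _)]/= jump_xz.
Qed.

(* The letters after the prefix x y alternately extend the chain of x and that
   of y. *)
Lemma prefixed_freeE n x y :
  prefixed_free n x y = chain_ext (uphalf n) x * chain_ext n./2 y.
Proof.
elim: n x y => [|n IHn] x y.
  rewrite /prefixed_free -[RHS]/(#|'I_3| ^ 0) -card_tuple.
  by apply: eq_card => t; rewrite inE tuple0.
rewrite prefixed_freeS /= big_distrl /=.
by apply: eq_bigr => z _; rewrite IHn mulnC.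
Qed.

(* a(k+1) in the notation of the header *)
Definition chain_count k : nat := \sum_(x : 'I_3) chain_ext k x.

Lemma chain_extS k x :
  chain_ext k.+1 x + (x == ord0) * chain_ext k ord_max = chain_count k.
Proof.
rewrite /chain_count (bigID (jump x)) /= addnC; congr (_ + _).
rewrite (eq_bigl (fun z => (x == ord0) && (z == ord_max))) => [|z]; last exact: jumpE.
by case: (x == ord0); [rewrite mul1n (big_pred1 ord_max) | rewrite big_pred0].
Qed.

Lemma chain_extS_max k : chain_ext k.+1 ord_max = chain_count k.
Proof. by rewrite -(chain_extS k ord_max) addn0. Qed.

Lemma chain_countS k : chain_count k.+1 + chain_ext k ord_max = 3 * chain_count k.
Proof.
have -> : 3 * chain_count k = \sum_(x : 'I_3) chain_count k.
  by rewrite sum_nat_const card_ord.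
rewrite -(eq_bigr _ (fun x _ => chain_extS k x)) big_split /=; congr (_ + _).
by rewrite (bigD1 ord0) //= big1 ?mul1n ?addn0 // => x /negPf ->.
Qed.

Lemma chain_count_rec k : chain_count k.+2 + chain_count k = 3 * chain_count k.+1.
Proof. by rewrite -(chain_extS_max k) chain_countS. Qed.

Lemma F_rec2 m : F m.+4 + F m = 3 * F m.+2.
Proof. rewrite /=; lia. Qed.

Lemma chain_count_F k : chain_count k = F (2 * k.+1).
Proof.
suff : chain_count k = F (2 * k.+1) /\ chain_count k.+1 = F (2 * k.+2) by case.
elim: k => [|k [IHk IHk1]].
  have := chain_countS 0; rewrite [chain_count 0]sum_nat_const card_ord /=; lia.
split=> //; move: IHk IHk1 (chain_count_rec k) (F_rec2 (2 * k.+1)).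
have -> : 2 * k.+3 = (2 * k.+1).+4 by lia.
have -> : 2 * k.+2 = (2 * k.+1).+2 by lia.
lia.
Qed.

Lemma jump_free_short (w : seq 'I_3) : size w <= 2 -> jump_free w.
Proof. by case: w => [|x [|y [|]]]. Qed.

Lemma card_jump_free_short N :
  N <= 2 -> #|[set w : N.-tuple 'I_3 | jump_free w]| = 3 ^ N.
Proof.
move=> le_N2; rewrite -[in RHS](card_ord 3) -card_tuple.
by apply: eq_card => w; rewrite inE jump_free_short ?size_tuple.
Qed.

Lemma card_jump_freeSS m :
  #|[set w : m.+2.-tuple 'I_3 | jump_free w]|
    = chain_count (uphalf m) * chain_count m./2.
Proof.
rewrite card_tuple_cons /chain_count big_distrlr; apply: eq_bigr => x _.
rewrite (card_tuple_cons _ _ (fun w => jump_free (x :: w))).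
by apply: eq_bigr => y _; rewrite -[RHS]/(chain_ext _ x * chain_ext _ y) -prefixed_freeE.
Qed.

Lemma card_jump_free N :
  #|[set w : N.-tuple 'I_3 | jump_free w]| = F (2 * uphalf N) * F (2 * N./2).
Proof.
case: N => [|[|m]]; try by rewrite card_jump_free_short.
by rewrite card_jump_freeSS !chain_count_F.
Qed.

Lemma card_s_eq0 N :
  #|[set w : N.-tuple 'I_3 | s w == 0]| = F (2 * uphalf N) * F (2 * N./2).
Proof. by rewrite -card_jump_free; apply: eq_card => w; rewrite !inE s_eq0. Qed.

Theorem mainTheorem5 (n : nat) :
  #|[set w : (2 * n).-tuple 'I_3 | s w == 0]| = F (2 * n) ^ 2
  /\ #|[set w : (2 * n).+1.-tuple 'I_3 | s w == 0]| = F (2 * n) * F (2 * n + 2).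
Proof.
have half_2n : (2 * n)./2 = n by rewrite mul2n doubleK.
have uphalf_2n : uphalf (2 * n) = n by rewrite mul2n uphalf_double.
rewrite !card_s_eq0 -[uphalf _.+1]/((2 * n)./2.+1) -[_.+1./2]/(uphalf (2 * n)).
by rewrite half_2n uphalf_2n mulnn mulnSr; split=> //; apply: mulnC.
Qed.
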